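(* Fix $\theta\in(0,1]$. For every integer $k\ge1$, $$\sup\Big\{\sup_{x\in\mathbb X}\frac{|(\widehat P_kf)(x)-(Pf)(x)|}{V(x)}:\ f:\mathbb X\to\mathbb C\ \text{measurable},\ \sup_{\mathbb X}|f|\le1\Big\}\ \le\ \tau_k:=2\max\Big(\frac1{v(k)},\ \alpha_k+\ell_{k,\theta}\,\delta_k^{\theta}\Big).$$
   Context: Let $(\mathbb X,d)$ be a metric space with Borel $\sigma$-algebra $\mathcal X$, $\mu$ a positive measure, and $P$ a Markov kernel $P(x,dy)=p(x,y)\,\mu(dy)$ with $p:\mathbb X^2\to[0,\infty)$ measurable, $\int p(x,y)\mu(dy)=1$; $(Pf)(x)=\int f(y)p(x,y)\mu(dy)$. Fix $x_0\in\mathbb X$. Let $v:[0,\infty)\to[1,\infty)$ be unbounded, increasing, continuous with $v(0)=1$, and $V(x):=v(d(x,x_0))$. For each integer $k\ge1$: $\delta_k>0$; $\mathbb X_k\in\mathcal X$ with $\{d(x,x_0)<k\}\subseteq\mathbb X_k\subseteq\{d(x,x_0)\le k\}$; $\{\mathbb X_{i,k}\}_{i\in I_k}$ a finite family of pairwise disjoint nonempty measurable sets with union $\mathbb X_k$ and $\mathrm{diam}(\mathbb X_{i,k})\le\delta_k$. Define $m_{i,k}(f):=\int_{\mathbb X_k}f(y)\inf_{t\in\mathbb X_{i,k}}p(t,y)\,\mu(dy)$, $(\widehat Q_kf)(x):=\sum_{i\in I_k}m_{i,k}(f)1_{\mathbb X_{i,k}}(x)$, $\psi_k:=1_{\mathbb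 X}-\widehat Q_k1_{\mathbb X}$, $\widehat P_kf:=\widehat Q_kf+f(x_0)\psi_k$. Let $\alpha_k:=\sup_{u\in\mathbb X_k}P(u,\mathbb X\setminus\mathbb X_k)/V(u)$, $L_{i,k,\theta}(y):=\sup\{|p(x,y)-p(x',y)|/d(x,x')^\theta:\ x,x'\in\mathbb X_{i,k},\ x\ne x'\}\in[0,\infty]$ for $y\in\mathbb X_k$, and $\ell_{k,\theta}:=\max_{i\in I_k}\int_{\mathbb X_k}L_{i,k,\theta}(y)\,\mu(dy)\in[0,\infty]$. *)

From HB Require Import structures.
From mathcomp Require Import all_boot all_order all_algebra.
From mathcomp Require Import all_classical all_reals all_analysis.
From mathcomp Require Import complex.
Set Implicit Arguments. Unset Strict Implicit. Unset Printing Implicit Defensive.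
Import Order.TTheory GRing.Theory Num.Theory.
Import ComplexField.
Local Open Scope classical_set_scope.
Local Open Scope ring_scope.
Local Open Scope complex_scope.

Section Defs.
Context {dsp : measure_display} {X : measurableType dsp} {R : realType}.

Definition is_metric (d : X -> X -> R) : Prop :=
  [/\ forall x y, 0 <= d x y,
      forall x y, d x y = 0 <-> x = y,
      forall x y, d x y = d y x &
      forall x y z, d x z <= d x y + d y z].

Definition dopen (d : X -> X -> R) (A : set X) : Prop :=
  forall x, A x -> exists e : R, 0 < e /\ forall y, d x y < e -> A y.

Definition is_borel (d : X -> X -> R) : Prop :=
  forall A : set X, measurable A <-> <<s [set B | dopen d B] >> A.

(** measurability of a complex-valued function (Borel sets of C = R^2) *)
Definition cmeasurable (f : X -> R[i]) : Prop :=
  measurable_fun setT (fun x => complex.Re (f x)) /\ measurable_fun setT (fun x => complex.Im (f x)).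

Definition cintegral (mu : {measure set X -> \bar R}) (D : set X)
  (f : X -> R[i]) : R[i] :=
  Complex (Rintegral mu D (fun y => complex.Re (f y))) (Rintegral mu D (fun y => complex.Im (f y))).

Definition Pop (mu : {measure set X -> \bar R}) (p : X -> X -> R)
  (f : X -> R[i]) (x : X) : R[i] :=
  cintegral mu setT (fun y => f y * (p x y)%:C).

Definition Pker (mu : {measure set X -> \bar R}) (p : X -> X -> R)
  (u : X) (A : set X) : \bar R :=
  (\int[mu]_(y in A) (p u y)%:E)%E.

Definition pinf (p : X -> X -> R) (A : set X) (y : X) : R :=
  inf [set p t y | t in A].

Definition mik (mu : {measure set X -> \bar R}) (p : X -> X -> R)
  (Xk Xik : set X) (f : X -> R[i]) : R[i] :=
  cintegral mu Xk (fun y => f y * (pinf p Xik y)%:C).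

Definition Qhat (I : finType) (mu : {measure set X -> \bar R}) (p : X -> X -> R)
  (Xk : set X) (part : I -> set X) (f : X -> R[i]) (x : X) : R[i] :=
  \sum_(i : I) mik mu p Xk (part i) f * (\1_(part i) x : R)%:C.

Definition psi (I : finType) (mu : {measure set X -> \bar R}) (p : X -> X -> R)
  (Xk : set X) (part : I -> set X) (x : X) : R[i] :=
  1 - Qhat mu p Xk part (fun _ => 1) x.

Definition Phat (I : finType) (mu : {measure set X -> \bar R}) (p : X -> X -> R)
  (Xk : set X) (part : I -> set X) (x0 : X) (f : X -> R[i]) (x : X) : R[i] :=
  Qhat mu p Xk part f x + f x0 * psi mu p Xk part x.

(** L_{i,k,theta}(y) in [0, +oo]; the supremum of the empty set
    (X_{i,k} a singleton) is taken as 0, all other values being >= 0 *)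
Definition Lik (d : X -> X -> R) (p : X -> X -> R) (Xik : set X) (theta : R)
  (y : X) : \bar R :=
  ereal_sup ([set 0%E] `|`
    [set z | exists x x', [/\ Xik x, Xik x', x <> x' &
        z = (`|p x y - p x' y| / (d x x') `^ theta)%:E] ]).

Definition ell (I : finType) (mu : {measure set X -> \bar R}) (d : X -> X -> R)
  (p : X -> X -> R) (Xk : set X) (part : I -> set X) (theta : R) : \bar R :=
  \big[maxe/0%E]_(i : I) (\int[mu]_(y in Xk) Lik d p (part i) theta y)%E.

Definition alpha (mu : {measure set X -> \bar R}) (p : X -> X -> R)
  (V : X -> R) (Xk : set X) : \bar R :=
  ereal_sup [set (Pker mu p u (~` Xk) * ((V u)^-1)%:E)%E | u in Xk].

End Defs.

(* The complex number (Phat_k f - P f)(x) is normed by a real linear functional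
   z |-> a Re z + b Im z with a^2 + b^2 <= 1, which reduces everything to
   integrals of the real function h = a Re f + b Im f, bounded by 1.
   Off X_k, (Phat_k f)(x) = f(x0), so the error is at most 2 <= 2 V(x) / v(k).
   On a cell X_{i,k}, Phat_k integrates f against the lower envelope
   q = inf_{t in X_{i,k}} p(t,.) on X_k and puts the missing mass
   1 - \int_{X_k} q at x0; compared with p(x,.) this costs at most twice
   \int_{X_k} (p(x,.) - q) + P(x, X \ X_k).  The Hoelder bound on p over a cell of
   diameter delta_k bounds the first term by ell_{k,theta} delta_k^theta, and
   the second is at most alpha_k V(x). *)

From HB Require Import structures.
From mathcomp Require Import all_boot all_order all_algebra.
From mathcomp Require Import all_classical all_reals all_analysis.
From mathcomp Require Import complex.
From mathcomp Require Import ring lra.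
Set Implicit Arguments. Unset Strict Implicit. Unset Printing Implicit Defensive.
Import Order.TTheory GRing.Theory Num.Theory.
Import ComplexField.
Import numFieldTopology.Exports numFieldNormedType.Exports.
Local Open Scope classical_set_scope.
Local Open Scope ring_scope.
Local Open Scope complex_scope.

Section complex_functional.
Variable R : rcfType.
Implicit Types (a b r : R) (z w : R[i]).

Definition cdot a b z : R := a * complex.Re z + b * complex.Im z.

Lemma cdotD a b z w : cdot a b (z + w) = cdot a b z + cdot a b w.
Proof. by case: z w => ? ? [? ?]; rewrite /cdot /=; ring. Qed.

Lemma cdotB a b z w : cdot a b (z - w) = cdot a b z - cdot a b w.
Proof. by case: z w => ? ? [? ?]; rewrite /cdot /=; ring. Qed.

Lemma cdotMr a b z r : cdot a b (z * r%:C) = cdot a b z * r.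
Proof. by case: z => ? ?; rewrite /cdot /=; ring. Qed.

Lemma cdot_le_normc a b z : a ^+ 2 + b ^+ 2 <= 1 -> cdot a b z <= Normc.normc z.
Proof.
case: z => x y ab; rewrite /cdot /=.
have [le0|gt0] := lerP (a * x + b * y) 0; first exact: le_trans le0 (sqrtr_ge0 _).
rewrite -(ger0_norm (ltW gt0)) -sqrtr_sqr; apply: ler_wsqrtr.
have cauchy_schwarz : (a * x + b * y) ^+ 2 <= (a ^+ 2 + b ^+ 2) * (x ^+ 2 + y ^+ 2).
  by rewrite -subr_ge0 (_ : _ - _ = (a * y - b * x) ^+ 2) ?sqr_ge0 //; ring.
apply: le_trans cauchy_schwarz _; rewrite -[leRHS]mul1r ler_wpM2r //.
by rewrite addr_ge0 // sqr_ge0.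
Qed.

Lemma normr_cdot_le_normc a b z :
  a ^+ 2 + b ^+ 2 <= 1 -> `|cdot a b z| <= Normc.normc z.
Proof.
move=> ab; rewrite ler_norml cdot_le_normc // andbT lerNl.
have -> : - cdot a b z = cdot (- a) (- b) z by rewrite /cdot; ring.
by rewrite cdot_le_normc // !sqrrN.
Qed.

Lemma normr_Re_le_normc z : `|complex.Re z| <= Normc.normc z.
Proof.
have := @normr_cdot_le_normc 1 0 z; rewrite /cdot mul1r mul0r addr0.
by apply; rewrite expr1n expr0n addr0.
Qed.

Lemma normr_Im_le_normc z : `|complex.Im z| <= Normc.normc z.
Proof.
have := @normr_cdot_le_normc 0 1 z; rewrite /cdot mul1r mul0r add0r.
by apply; rewrite expr1n expr0n add0r.
Qed.

Lemma normc_cdot z : exists a b, a ^+ 2 + b ^+ 2 <= 1 /\ Normc.normc z = cdot a b z.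
Proof.
case: z => x y; rewrite /cdot /=; set n := Num.sqrt _.
have n2 : n ^+ 2 = x ^+ 2 + y ^+ 2 by rewrite sqr_sqrtr // addr_ge0 // sqr_ge0.
have [n0|n_neq0] := eqVneq n 0.
  by exists 0, 0; rewrite n0 expr0n addr0 ler01 !mul0r addr0.
exists (x / n), (y / n); split.
  by rewrite !expr_div_n -mulrDl -n2 divff // expf_neq0.
by rewrite ![_ / n * _]mulrAC -mulrDl -!expr2 -n2 expr2 mulfK.
Qed.

End complex_functional.

Section complex_integral.
Context {dsp : measure_display} {X : measurableType dsp} {R : realType}.
Variable mu : {measure set X -> \bar R}.
Implicit Types (D : set X) (a b : R).

Lemma ge0_le_integral_nonmeasurable D (f g : X -> \bar R) :
  (forall x, D x -> (0 <= f x)%E) -> (forall x, D x -> (f x <= g x)%E) ->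
  (\int[mu]_(x in D) f x <= \int[mu]_(x in D) g x)%E.
Proof.
move=> f0 fg; have g0 x : D x -> (0 <= g x)%E.
  by move=> Dx; exact: le_trans (f0 _ Dx) (fg _ Dx).
rewrite (ge0_integralE mu f0) (ge0_integralE mu g0).
apply: ereal_sup_le => _ [h hf <-]; exists h => //= y.
exact: le_trans (hf y) (lee_restrict fg y).
Qed.

Lemma integrable_bounded_mul D (h s : X -> R) : measurable D ->
  measurable_fun D h -> (forall y, D y -> `|h y| <= 1) ->
  mu.-integrable D (EFin \o s) -> mu.-integrable D (EFin \o (fun y => h y * s y)).
Proof.
move=> mD mh h1 si; apply: (le_integrable mD _ _ si).
  apply/measurable_realfun.measurable_EFinP/measurable_realfun.measurable_funM => //.
  exact/measurable_realfun.measurable_EFinP/(measurable_int mu si).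
move=> y Dy /=; rewrite lee_fin normrM ler_piMl //; exact: h1.
Qed.

Lemma integrableZl_EFin D (f : X -> R) (c : R) : measurable D ->
  mu.-integrable D (EFin \o f) -> mu.-integrable D (EFin \o (fun y => c * f y)).
Proof.
move=> mD i; apply: (eq_integrable mD _ _ _ (integrableZl mD c i)).
by move=> y _; rewrite /= EFinM.
Qed.

Lemma integrableB_EFin D (f g : X -> R) : measurable D ->
  mu.-integrable D (EFin \o f) -> mu.-integrable D (EFin \o g) ->
  mu.-integrable D (EFin \o (fun y => f y - g y)).
Proof.
move=> mD i1 i2; apply: (eq_integrable mD _ _ _ (integrableB mD i1 i2)).
by move=> y _; rewrite /= EFinB.
Qed.

Lemma cdot_cintegral a b D (g : X -> R[i]) : measurable D ->
  mu.-integrable D (EFin \o (fun y => complex.Re (g y))) ->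
  mu.-integrable D (EFin \o (fun y => complex.Im (g y))) ->
  cdot a b (cintegral mu D g) = Rintegral mu D (fun y => cdot a b (g y)).
Proof.
move=> mD iRe iIm.
by rewrite /cdot /= -!RintegralZl // -RintegralD //; exact: integrableZl_EFin.
Qed.

Lemma cdot_cintegral_mulr a b D (f : X -> R[i]) (s : X -> R) : measurable D ->
  cmeasurable f -> (forall y, Normc.normc (f y) <= 1) ->
  mu.-integrable D (EFin \o s) ->
  cdot a b (cintegral mu D (fun y => f y * (s y)%:C)) =
  Rintegral mu D (fun y => cdot a b (f y) * s y).
Proof.
move=> mD [mRe mIm] f1 si.
have ReIm_mulr (z : R[i]) (r : R) :
    complex.Re (z * r%:C) = complex.Re z * r /\ complex.Im (z * r%:C) = complex.Im z * r.
  by case: z => ? ? /=; split; ring.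
rewrite cdot_cintegral //.
- by apply: eq_Rintegral => y _; rewrite cdotMr.
- apply: (eq_integrable mD _ _ _ (integrable_bounded_mul mD _ _ si)).
  + by move=> y _ /=; rewrite (ReIm_mulr _ _).1.
  + exact: measurable_funS mRe.
  + by move=> y _; exact: le_trans (normr_Re_le_normc _) (f1 y).
- apply: (eq_integrable mD _ _ _ (integrable_bounded_mul mD _ _ si)).
  + by move=> y _ /=; rewrite (ReIm_mulr _ _).2.
  + exact: measurable_funS mIm.
  + by move=> y _; exact: le_trans (normr_Im_le_normc _) (f1 y).
Qed.

End complex_integral.

Section truncated_kernel.
Context {dsp : measure_display} {X : measurableType dsp} {R : realType}.
Variables (mu : {measure set X -> \bar R}) (s h : X -> R).
Hypotheses (s_ge0 : forall y, 0 <= s y)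
  (s_int : mu.-integrable setT (EFin \o s)) (s1 : Rintegral mu setT s = 1)
  (mh : measurable_fun setT h) (h1 : forall y, `|h y| <= 1).

Let s_intS A : measurable A -> mu.-integrable A (EFin \o s).
Proof. by move=> mA; exact: integrableS s_int. Qed.

Let hs_int A : measurable A -> mu.-integrable A (EFin \o (fun y => h y * s y)).
Proof.
move=> mA; apply: integrable_bounded_mul => //; last exact: s_intS.
exact: measurable_funS mh.
Qed.

Let mul_bounded_ge y : - s y <= h y * s y.
Proof.
have := h1 y; rewrite ler_norml => /andP[hl _].
by have := s_ge0 y; nra.
Qed.

Lemma oppr_Rintegral_le_Rintegral_mul A : measurable A ->
  - Rintegral mu A s <= Rintegral mu A (fun y => h y * s y).
Proof.
move=> mA; rewrite -subr_ge0 opprK addrC -RintegralD ?s_intS ?hs_int //.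
by apply: Rintegral_ge0 => // y _; rewrite -lerBlDl sub0r mul_bounded_ge.
Qed.

Lemma sub_Rintegral_mul_le2 c : `|c| <= 1 ->
  c - Rintegral mu setT (fun y => h y * s y) <= 2.
Proof.
move=> c1; have := oppr_Rintegral_le_Rintegral_mul measurableT.
by move: c1; rewrite s1 ler_norml; lra.
Qed.

Variables (D : set X) (q : X -> R).
Hypotheses (mD : measurable D) (q_int : mu.-integrable D (EFin \o q))
  (q_le_s : forall y, D y -> q y <= s y).

Lemma truncated_kernel_error_le c : `|c| <= 1 ->
  Rintegral mu D (fun y => h y * q y) + c * (1 - Rintegral mu D q)
    - Rintegral mu setT (fun y => h y * s y)
  <= 2 * (Rintegral mu D (fun y => s y - q y) + Rintegral mu (~` D) s).
Proof.
move=> c1.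
have splitT g : mu.-integrable setT (EFin \o g) ->
    Rintegral mu setT g = Rintegral mu D g + Rintegral mu (~` D) g.
  by move=> ig; rewrite -(setUv D) Rintegral_setU ?setUv //;
    [exact: measurableC | exact/disj_setPCl].
have hq_int : mu.-integrable D (EFin \o (fun y => h y * q y)).
  by apply: integrable_bounded_mul => //; exact: measurable_funS mh.
have mass : 1 - Rintegral mu D q =
    Rintegral mu D (fun y => s y - q y) + Rintegral mu (~` D) s.
  by rewrite RintegralB ?s_intS // -s1 (splitT _ s_int); lra.
have on_D : Rintegral mu D (fun y => h y * q y) - Rintegral mu D (fun y => h y * s y)
    <= Rintegral mu D (fun y => s y - q y).
  rewrite -RintegralB ?hs_int //.
  apply: le_Rintegral => //.
  - exact: integrableB_EFin mD hq_int (hs_int mD).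
  - exact: integrableB_EFin mD (s_intS mD) q_int.
  move=> y Dy; have := h1 y; rewrite ler_norml => /andP[hl hu].
  have := q_le_s Dy; rewrite -subr_ge0 => sq; nra.
have on_compl := oppr_Rintegral_le_Rintegral_mul (measurableC mD).
have mass_ge0 : 0 <= 1 - Rintegral mu D q.
  rewrite mass addr_ge0 //; apply: Rintegral_ge0 => // y Dy.
  by rewrite subr_ge0 q_le_s.
have at_c : c * (1 - Rintegral mu D q) <= 1 - Rintegral mu D q.
  by rewrite ler_piMl //; move: c1; rewrite ler_norml => /andP[].
rewrite (splitT _ (hs_int measurableT)); lra.
Qed.

End truncated_kernel.

Section lower_envelope.
Context {dsp : measure_display} {X : measurableType dsp} {R : realType}.
Variables (d p : X -> X -> R) (A : set X).
Hypothesis p_ge0 : forall x y, 0 <= p x y.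

Lemma pinf_le t y : A t -> pinf p A y <= p t y.
Proof.
by move=> At; apply: ge_inf; [exists 0 => _ [u _ <-] | exists t].
Qed.

Lemma pinf_ge0 y : A !=set0 -> 0 <= pinf p A y.
Proof. by move=> [t At]; apply: lb_le_inf => [|_ [u _ <-]]; [exists (p t y), t|]. Qed.

Variables (delta theta : R) (x : X).
Hypotheses (d_ge0 : forall x y, 0 <= d x y) (d_eq0 : forall x y, d x y = 0 -> x = y)
  (diamA : forall x x', A x -> A x' -> d x x' <= delta)
  (delta_gt0 : 0 < delta) (theta_gt0 : 0 < theta) (Ax : A x).

Lemma sub_pinf_le_Lik y :
  (((p x y - pinf p A y) / delta `^ theta)%:E <= Lik d p A theta y)%E.
Proof.
have dt_gt0 : 0 < delta `^ theta by exact: powR_gt0.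
have : (0 <= Lik d p A theta y)%E by apply: ereal_sup_ubound; left.
case E: (Lik d p A theta y) => [l| |] // l_ge0; last exact: leey.
rewrite lee_fin in l_ge0; rewrite lee_fin ler_pdivrMr // lerBlDr -lerBlDl.
apply: lb_le_inf; first by exists (p x y), x.
move=> _ [t At <-]; have [<-|t_neq_x] := pselect (t = x).
  by rewrite lerBlDl lerDr mulr_ge0 // ltW.
have dxt_gt0 : 0 < d x t.
  by rewrite lt_neqAle d_ge0 andbT eq_sym; apply/eqP => /d_eq0 /esym.
have dxt_le : d x t `^ theta <= delta `^ theta.
  by apply: ge0_ler_powR; rewrite ?nnegrE ?d_ge0 ?(ltW theta_gt0) ?(ltW delta_gt0) ?diamA.
have : `|p x y - p t y| / d x t `^ theta <= l.
  rewrite -lee_fin -E; apply: ereal_sup_ubound; right.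
  by exists x, t; split => // /esym.
rewrite ler_pdivrMr ?powR_gt0 // => Ll.
have := ler_norm (p x y - p t y).
have : l * d x t `^ theta <= l * delta `^ theta by rewrite ler_wpM2l.
lra.
Qed.

End lower_envelope.

Section finite_partition.
Context {dsp : measure_display} {X : measurableType dsp} {R : realType}.
Variables (mu : {measure set X -> \bar R}) (p : X -> X -> R) (D : set X).
Variables (I : finType) (part : I -> set X).
Hypotheses (part_disj : forall i j, i <> j -> part i `&` part j = set0)
  (part_cover : \bigcup_(i in setT) part i = D).

Lemma Qhat_notin f x : ~ D x -> Qhat mu p D part f x = 0.
Proof.
move=> Dx; rewrite /Qhat big1 // => i _; rewrite indicE memNset ?mulr0 //.
by move=> pix; apply: Dx; rewrite -part_cover; exists i.
Qed.

Lemma Qhat_in f x i : part i x -> Qhat mu p D part f x = mik mu p D (part i) f.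
Proof.
move=> pix; rewrite /Qhat (bigD1 i) //= indicE mem_set // mulr1 big1 ?addr0 //.
move=> j /eqP ji; rewrite indicE memNset ?mulr0 // => pjx.
by have : (part j `&` part i) x by []; rewrite part_disj.
Qed.

Lemma mik_cst1 A : mik mu p D A (fun _ => 1) = (Rintegral mu D (pinf p A))%:C.
Proof.
rewrite /mik /cintegral; congr (_ +i* _).
  by apply: eq_Rintegral => y _; rewrite mul1r.
transitivity (Rintegral mu D (fun _ => 0)); last by rewrite /Rintegral integral0.
by apply: eq_Rintegral => y _ /=; rewrite mulr0 mul0r addr0.
Qed.

End finite_partition.

Section level_bound.
Context {dsp : measure_display} {X : measurableType dsp} {R : realType}.
Variables (mu : {measure set X -> \bar R}) (d p : X -> X -> R) (x0 : X).
Hypotheses (d_ge0 : forall x y, 0 <= d x y) (d_eq0 : forall x y, d x y = 0 -> x = y)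
  (p_ge0 : forall x y, 0 <= p x y) (mp : forall x, measurable_fun setT (p x))
  (p1 : forall x, (\int[mu]_(y in setT) (p x y)%:E = 1)%E).
Variables (D : set X) (I : finType) (part : I -> set X) (delta theta : R).
Hypotheses (mD : measurable D)
  (part_disj : forall i j, i <> j -> part i `&` part j = set0)
  (part_cover : \bigcup_(i in setT) part i = D)
  (part_diam : forall i x x', part i x -> part i x' -> d x x' <= delta)
  (mpinf : forall i, measurable_fun D (pinf p (part i)))
  (delta_gt0 : 0 < delta) (theta_gt0 : 0 < theta).

Let kernel_int x : mu.-integrable setT (EFin \o p x).
Proof.
apply/integrableP; split; first exact/measurable_realfun.measurable_EFinP.
under eq_integral => y _ do rewrite /= ger0_norm //.
by rewrite p1 ltry.
Qed.

Let kernel_intS x A : measurable A -> mu.-integrable A (EFin \o p x).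
Proof. by move=> mA; exact: integrableS (kernel_int x). Qed.

Let Rintegral_kernel x : Rintegral mu setT (p x) = 1.
Proof. by rewrite /Rintegral p1. Qed.

Let pinf_int i x : part i x -> mu.-integrable D (EFin \o pinf p (part i)).
Proof.
move=> pix; apply: (le_integrable mD _ _ (kernel_intS x mD)).
  exact/measurable_realfun.measurable_EFinP.
by move=> y _ /=; rewrite lee_fin !ger0_norm ?pinf_le ?pinf_ge0 //; exists x.
Qed.

Lemma Rintegral_compl_le_alpha (V : X -> R) x : D x ->
  ((Rintegral mu (~` D) (p x) / V x)%:E <= alpha mu p V D)%E.
Proof.
move=> Dx; apply: ereal_sup_ubound; exists x => //.
rewrite /Pker EFinM /Rintegral fineK //.
apply: integrable_fin_num => //; first exact: measurableC.
exact: kernel_intS (measurableC mD).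
Qed.

Lemma Rintegral_sub_pinf_le_ell i x : part i x ->
  ((Rintegral mu D (fun y => p x y - pinf p (part i) y))%:E
    <= ell mu d p D part theta * (delta `^ theta)%:E)%E.
Proof.
move=> pix; set q := pinf p (part i); set dt := delta `^ theta.
have dt_gt0 : 0 < dt by exact: powR_gt0.
have sq_int := integrableB_EFin mD (kernel_intS x mD) (pinf_int pix).
(* [Lik] need not be measurable, hence the division by [dt] before integrating. *)
have -> : Rintegral mu D (fun y => p x y - q y) =
    Rintegral mu D (fun y => dt^-1 * (p x y - q y)) * dt.
  by rewrite RintegralZl // mulrC mulVKf // gt_eqF.
rewrite EFinM; apply: lee_wpmul2r; first by rewrite lee_fin ltW.
apply: le_trans (le_bigmax _ _ i).
rewrite /Rintegral fineK; last exact/integrable_fin_num/integrableZl_EFin.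
apply: ge0_le_integral_nonmeasurable => y Dy.
  by rewrite lee_fin mulr_ge0 ?invr_ge0 ?subr_ge0 ?pinf_le // ltW.
by rewrite mulrC; apply: sub_pinf_le_Lik => //; exact: part_diam.
Qed.

Variables (V : X -> R) (vk : R).
Hypotheses (V_ge1 : forall x, 1 <= V x) (vk_gt0 : 0 < vk)
  (V_notin : forall x, ~ D x -> vk <= V x).

Lemma normc_Phat_sub_Pop_le f x : cmeasurable f -> (forall y, Normc.normc (f y) <= 1) ->
  ((Normc.normc (Phat mu p D part x0 f x - Pop mu p f x) / V x)%:E
    <= 2%:E * maxe (vk^-1)%:E
                  (alpha mu p V D + ell mu d p D part theta * (delta `^ theta)%:E))%E.
Proof.
move=> mf f1; have [a [b [ab ->]]] := normc_cdot (Phat mu p D part x0 f x - Pop mu p f x).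
have V_gt0 : 0 < V x := lt_le_trans ltr01 (V_ge1 x).
set h := fun y => cdot a b (f y).
have h1 y : `|h y| <= 1 by exact: le_trans (normr_cdot_le_normc _ ab) (f1 y).
have mh : measurable_fun setT h.
  case: mf => mRe mIm.
  by apply: measurable_realfun.measurable_funD; apply: measurable_realfun.measurable_funM.
have Pop_h : cdot a b (Pop mu p f x) = Rintegral mu setT (fun y => h y * p x y).
  exact: cdot_cintegral_mulr.
have [Dx|Dx] := pselect (D x); last first.
  rewrite /Phat /psi !Qhat_notin // add0r subr0 mulr1 cdotB Pop_h.
  have le2 := sub_Rintegral_mul_le2 (p_ge0 x) (kernel_int x) (Rintegral_kernel x)
    mh h1 (h1 x0).
  apply: (@le_trans _ _ (2 / vk)%:E).
    rewrite lee_fin; apply: le_trans (_ : 2 / V x <= _).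
      by rewrite ler_wpM2r // invr_ge0 ltW.
    by rewrite ler_wpM2l // lef_pV2 ?posrE // V_notin.
  by rewrite EFinM lee_wpmul2l ?lee_fin // le_max lexx.
have [i _ pix] : exists2 i, setT i & part i x by rewrite -part_cover in Dx.
rewrite /Phat /psi !(Qhat_in _ _ _ _ _ pix) // mik_cst1.
rewrite -(rmorph1 (real_complex R)) -rmorphB.
rewrite cdotB cdotD cdotMr Pop_h /mik cdot_cintegral_mulr //; last exact: pinf_int pix.
have q_le y : D y -> pinf p (part i) y <= p x y by move=> _; exact: pinf_le.
have err := truncated_kernel_error_le (p_ge0 x) (kernel_int x) (Rintegral_kernel x)
  mh h1 mD (pinf_int pix) q_le (h1 x0).
set D1 := Rintegral mu D (fun y => p x y - pinf p (part i) y) in err *.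
set Sc := Rintegral mu (~` D) (p x) in err *.
have D1_ge0 : 0 <= D1 by apply: Rintegral_ge0 => y Dy; rewrite subr_ge0 q_le.
have D1_le := Rintegral_sub_pinf_le_ell pix; have Sc_le := Rintegral_compl_le_alpha V Dx.
apply: (@le_trans _ _ (2 * (D1 + Sc / V x))%:E).
  rewrite lee_fin; apply: (@le_trans _ _ (2 * (D1 + Sc) / V x)).
    by apply: ler_wpM2r; [rewrite invr_ge0 ltW | exact: err].
  by rewrite -mulrA ler_wpM2l // mulrDl lerD2r ler_pdivrMr // ler_peMr.
rewrite EFinM lee_wpmul2l ?lee_fin // EFinD le_max addeC; apply/orP; right.
exact: leeD.
Qed.

End level_bound.

Theorem lemma2 (dsp : measure_display) (X : measurableType dsp) (R : realType)
  (d : X -> X -> R) (mu : {measure set X -> \bar R}) (p : X -> X -> R)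
  (x0 : X) (v : R -> R) (delta : nat -> R) (Xk : nat -> set X)
  (I : nat -> finType) (part : forall k : nat, I k -> set X) (theta : R) :
  is_metric d -> is_borel d ->
  measurable_fun setT (fun xy : X * X => p xy.1 xy.2) ->
  (forall x y, 0 <= p x y) ->
  (forall x, (\int[mu]_(y in setT) (p x y)%:E = 1)%E) ->
  v 0 = 1 ->
  (forall t, 0 <= t -> 1 <= v t) ->
  (forall s t, 0 <= s -> s <= t -> v s <= v t) ->
  {within [set t : R | 0 <= t], continuous v} ->
  (forall M : R, exists t, 0 <= t /\ M < v t) ->
  (forall k : nat, (1 <= k)%N -> 0 < delta k) ->
  (forall k : nat, (1 <= k)%N ->
     [/\ measurable (Xk k),
         [set x | d x x0 < k%:R] `<=` Xk k &
         Xk k `<=` [set x | d x x0 <= k%:R] ]) ->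
  (forall (k : nat) (i : I k), (1 <= k)%N ->
     [/\ measurable (part k i), part k i !=set0 &
         forall x x', part k i x -> part k i x' -> d x x' <= delta k ]) ->
  (forall (k : nat) (i j : I k), (1 <= k)%N -> i <> j ->
     part k i `&` part k j = set0) ->
  (forall k : nat, (1 <= k)%N -> \bigcup_(i in setT) part k i = Xk k) ->
  (* implicit in the definition of m_{i,k}: its integrand is measurable *)
  (forall (k : nat) (i : I k), (1 <= k)%N ->
     measurable_fun (Xk k) (pinf p (part k i))) ->
  0 < theta <= 1 ->
  forall k : nat, (1 <= k)%N ->
  (ereal_sup
     [set ereal_sup
            [set ((Normc.normc (Phat mu p (Xk k) (part k) x0 f x - Pop mu p f x))
                   / v (d x x0))%:E | x in setT]
     | f in [set f : X -> R[i] | cmeasurable f /\ forall x, (Normc.normc (f x) <= 1)%R]]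
   <= 2%:E * maxe ((v k%:R)^-1)%:E
        (alpha mu p (fun x => v (d x x0)) (Xk k)
         + ell mu d p (Xk k) (part k) theta * ((delta k) `^ theta)%:E))%E.
Proof.
move=> [d_ge0 d_eq0 _ _] _ mp p_ge0 p1 _ v_ge1 v_mono _ _ delta_gt0 hXk hpart hdisj
  hcover hpinf /andP[theta_gt0 _] k k1.
have [mXk ball_sub _] := hXk k k1.
have mpx x : measurable_fun setT (p x) := measurableT_comp mp (pair1_measurable x).
have part_diam i x x' : part k i x -> part k i x' -> d x x' <= delta k.
  by have [_ _] := hpart k i k1; apply.
have V_ge1 x : 1 <= v (d x x0) by exact: v_ge1.
have vk_gt0 : 0 < v k%:R by apply: lt_le_trans (v_ge1 _ (ler0n _ k)).
have V_notin x : ~ Xk k x -> v k%:R <= v (d x x0).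
  by move=> Xkx; apply: v_mono; rewrite ?ler0n // leNgt; apply/negP => /ball_sub.
apply: ge_ereal_sup => _ [f [mf f1] <-]; apply: ge_ereal_sup => _ [x _ <-].
exact: (normc_Phat_sub_Pop_le x0 d_ge0 (fun x y => (d_eq0 x y).1) p_ge0 mpx p1 mXk
  (fun i j => hdisj k i j k1) (hcover k k1) part_diam (fun i => hpinf k i k1)
  (delta_gt0 k k1) theta_gt0 V_ge1 vk_gt0 V_notin x mf f1).
Qed.
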